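(* Let $N\ge 2$ and let $\mathcal{H}$ be the class of $N$-layer feedforward networks $h=\varphi_N\circ\cdots\circ\varphi_1:\mathcal{X}\to\mathcal{Y}$ with $\varphi_k\in\Phi_k$ for each $k$. For $i\in\{1,\dots,N-1\}$ let $\mathcal{G}_i=\{\varphi_i\circ\cdots\circ\varphi_1:\varphi_k\in\Phi_k\}$ (first $i$ layers) and $\mathcal{F}_i=\{\varphi_N\circ\cdots\circ\varphi_{i+1}:\varphi_k\in\Phi_k\}$ (remaining layers), so $\mathcal{H}=\mathcal{F}_i\mathcal{G}_i$. Fix $h=\varphi_N\circ\cdots\circ\varphi_1\in\mathcal{H}$ and write $h=f_ig_i$ with $g_i=\varphi_i\circ\cdots\circ\varphi_1$, $f_i=\varphi_N\circ\cdots\circ\varphi_{i+1}$. Then for all $1\le i\le j\le N-1$: $$d_{{\mathcal{F}_i}_{\mathcal{G}_i\Delta\mathcal{G}_i}}(p_S,p_T)\le d_{{\mathcal{F}_j}_{\mathcal{G}_j\Delta\mathcal{G}_j}}(p_S,p_T)$$ and $$d_{\mathcal{F}_i\Delta\mathcal{F}_i}\big(p_S^{g_i}(Z),p_T^{g_i}(Z)\big)\ge d_{\mathcal{F}_j\Delta\mathcal{F}_j}\big(p_S^{g_j}(Z),p_T^{g_j}(Z)\big).$$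
   Context: $\mathcal{X}\subseteq\mathbb{R}^n$, $\mathcal{Y}=\{0,1\}$; $\Phi_k$ is a class of maps from the $(k-1)$-th layer space to the $k$-th layer space (layer $0$ space is $\mathcal{X}$, layer $N$ space is $\mathcal{Y}$). $p_S,p_T$ are probability distributions on $\mathcal{X}\times\mathcal{Y}$. Composition is written by juxtaposition. With zero-one loss $\ell(a,b)=\mathbf{1}[a\ne b]$, for $D\in\{S,T\}$ and hypotheses $h,h':\mathcal{X}\to\mathcal{Y}$, $R_D(h,h')=\mathbb{E}_{x\sim p_D}[\ell(h(x),h'(x))]$ ($x$ drawn from the $\mathcal{X}$-marginal of $p_D$). $p_D^{g}(Z)$ is the distribution of $g(X)$ for $X$ from the $\mathcal{X}$-marginal of $p_D$. For a predictor class $\mathcal{F}$ and embedding $g$: $d_{\mathcal{F}\Delta\mathcal{F}}(p_S^g(Z),p_T^g(Z))=\sup_{f_1,f_2\in\mathcal{F}}|R_S(f_1g,f_2g)-R_T(f_1g,f_2g)|$. For classes $\mathcal{F},\mathcal{G}$: $d_{\mathcal{F}_{\mathcal{G}\Delta\mathcal{G}}}(p_S,p_T)=\sup_{f\in\mathcal{F};\,g_1,g_2\in\mathcal{G}}|R_S(fg_1,fg_2)-R_T(fg_1,fg_2)|$. *)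

From HB Require Import structures.
From mathcomp Require Import all_boot all_order all_algebra.
From mathcomp Require Import all_classical all_reals all_analysis.
Set Implicit Arguments. Unset Strict Implicit. Unset Printing Implicit Defensive.
Import Order.TTheory GRing.Theory Num.Theory.
Local Open Scope classical_set_scope.
Local Open Scope ring_scope.

Definition loss01 {R : realType} {Y : Type} (a b : Y) : R :=
  \1_[set p : Y * Y | p.1 <> p.2] (a, b).

(* R_D(h,h') = E_{x ~ X-marginal of p_D}[ l(h x, h' x) ], with p_D a
   probability on X * Y (Y = {0,1} = bool); integrating over the joint
   distribution a function of the first coordinate only is integrating
   against the X-marginal. *)
Definition risk {d} {X : measurableType d} {R : realType} {Y' : Type}
  (P : probability (X * bool)%type R) (h h' : X -> Y') : \bar R :=
  (\int[P]_z (loss01 (h z.1) (h' z.1) : R)%:E)%E.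

Definition dFDeltaF {d} {X : measurableType d} {R : realType} {Zt Y' : Type}
  (PS PT : probability (X * bool)%type R) (F : set (Zt -> Y')) (g : X -> Zt)
  : \bar R :=
  ereal_sup [set r | exists f1 f2, F f1 /\ F f2 /\
     r = `| risk PS (f1 \o g) (f2 \o g) - risk PT (f1 \o g) (f2 \o g) |%E ].

Definition dFGDeltaG {d} {X : measurableType d} {R : realType} {Zt Y' : Type}
  (PS PT : probability (X * bool)%type R) (F : set (Zt -> Y')) (G : set (X -> Zt))
  : \bar R :=
  ereal_sup [set r | exists f g1 g2, F f /\ G g1 /\ G g2 /\
     r = `| risk PS (f \o g1) (f \o g2) - risk PT (f \o g1) (f \o g2) |%E ].

Section Layers.
Variables (d : measure_display) (X : measurableType d) (N : nat) (Z : nat -> Type).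

Definition layer (k : nat) : Type :=
  if k == 0%N as b return Type then (X : Type) else if k == N as b return Type then (bool : Type) else Z k.

Definition castL (m n : nat) (e : m = n) (x : layer m) : layer n :=
  eq_rect m layer x n e.

(* psi k : layer k -> layer k.+1  (this is phi_{k+1} of the paper). *)
Variable psi : forall k, layer k -> layer k.+1.

Fixpoint pref (i : nat) : layer 0 -> layer i :=
  match i return layer 0 -> layer i with
  | 0 => id
  | i'.+1 => @psi i' \o pref i'
  end.

Definition mid (i : nat) : forall m : nat, layer i -> layer (m + i) :=
  fix mid_rec (m : nat) : layer i -> layer (m + i) :=
  match m return layer i -> layer (m + i) with
  | 0 => id
  | m'.+1 => @psi (m' + i) \o mid_rec m'
  end.

End Layers.

Definition Gcls {d} (X : measurableType d) (N : nat) (Z : nat -> Type)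
  (Phi : forall k, set (layer X N Z k -> layer X N Z k.+1)) (i : nat)
  : set (X -> layer X N Z i) :=
  [set g | exists psi : forall k, layer X N Z k -> layer X N Z k.+1,
     (forall k, (k < i)%N -> Phi k (psi k)) /\ g = @pref d X N Z psi i].

Definition Fcls {d} (X : measurableType d) (N : nat) (Z : nat -> Type)
  (Phi : forall k, set (layer X N Z k -> layer X N Z k.+1)) (i : nat)
  : set (layer X N Z i -> layer X N Z N) :=
  [set f | exists (psi : forall k, layer X N Z k -> layer X N Z k.+1)
               (m : nat) (e : (m + i)%N = N),
     (forall k, (i <= k < N)%N -> Phi k (psi k)) /\
     f = castL e \o @mid d X N Z psi i m].

From HB Require Import structures.
From mathcomp Require Import all_boot all_order all_algebra.
From mathcomp Require Import all_classical all_reals all_analysis.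
From mathcomp Require Import zify.
Import Order.TTheory GRing.Theory Num.Theory.
Local Open Scope classical_set_scope.
Local Open Scope ring_scope.

(* Both discrepancies are suprema of quantities that depend only on the
   composite networks involved. Moving the cut from layer i to a deeper layer
   j >= i, a triple (f, g1, g2) of F_i x G_i x G_i is re-cut as a triple of
   F_j x G_j x G_j with the same composites f g1 and f g2 (the layers i+1..j
   of f go into g1 and g2), so the first supremum can only grow. With the
   embedding fixed to the prefix of h, a pair (f1, f2) of F_j is re-cut at
   layer i by prepending the layers i+1..j of h to both, so the second
   supremum can only shrink as the cut goes deeper. *)

Section DiscrepancyComparison.
Variables (R : realType) (d : measure_display) (X : measurableType d).
Variables (PS PT : probability (X * bool)%type R).

Lemma dFGDeltaG_le {Zt Zt' Y : Type} (F : set (Zt -> Y)) (G : set (X -> Zt))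
    (F' : set (Zt' -> Y)) (G' : set (X -> Zt')) :
  (forall f, F f -> exists2 f', F' f' &
     forall g, G g -> exists2 g', G' g' & f' \o g' = f \o g) ->
  (dFGDeltaG PS PT F G <= dFGDeltaG PS PT F' G')%E.
Proof.
move=> refactor; apply: ereal_sup_le => _ [f [g1 [g2 [Ff [Gg1 [Gg2 ->]]]]]].
have [f' F'f' factor] := refactor f Ff.
have [g1' G'g1' <-] := factor g1 Gg1; have [g2' G'g2' <-] := factor g2 Gg2.
by exists f', g1', g2'.
Qed.

Lemma dFDeltaF_le {Zt Zt' Y : Type} (F : set (Zt -> Y)) (g : X -> Zt)
    (F' : set (Zt' -> Y)) (g' : X -> Zt') :
  (forall f, F f -> exists2 f', F' f' & f' \o g' = f \o g) ->
  (dFDeltaF PS PT F g <= dFDeltaF PS PT F' g')%E.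
Proof.
move=> refactor; apply: ereal_sup_le => _ [f1 [f2 [Ff1 [Ff2 ->]]]].
have [f1' F'f1' <-] := refactor f1 Ff1; have [f2' F'f2' <-] := refactor f2 Ff2.
by exists f1', f2'.
Qed.

End DiscrepancyComparison.

Section Layers.
Variables (d : measure_display) (X : measurableType d) (N : nat) (Z : nat -> Type).
Notation layer := (layer X N Z).
Notation layers := (forall k, layer k -> layer k.+1).
Notation pref p i := (@pref d X N Z p i).
Notation mid p i m := (@mid d X N Z p i m).

Definition splice (s : nat) (p q : layers) : layers :=
  fun k => if (k < s)%N then p k else q k.

Lemma splice_lt s p q k : (k < s)%N -> splice s p q k = p k.
Proof. by rewrite /splice => ->. Qed.

Lemma splice_ge s p q k : (s <= k)%N -> splice s p q k = q k.
Proof. by rewrite /splice leqNgt => /negbTE->. Qed.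

Lemma pref_ext {p q : layers} {i : nat} :
  (forall k, (k < i)%N -> p k = q k) -> pref p i =1 pref q i.
Proof.
elim: i => [//|i IH] pq x /=.
by rewrite IH ?pq // => k /ltnW; apply: pq.
Qed.

Lemma mid_ext {p q : layers} {i : nat} (m : nat) :
  (forall k, (i <= k)%N -> p k = q k) -> mid p i m =1 mid q i m.
Proof. by move=> pq; elim: m => [//|m IH] y /=; rewrite IH pq // leq_addl. Qed.

Lemma mid_pref (p : layers) i m x : mid p i m (pref p i x) = pref p (m + i) x.
Proof. by elim: m => [//|m IH] /=; rewrite IH. Qed.

Lemma castL_pref (p : layers) a n (e : a = n) x :
  castL e (pref p a x) = pref p n x.
Proof. by case: n / e. Qed.

Lemma castL_mid_pref (c : layers) {p q : layers} {i m : nat} (e : (m + i)%N = N) x :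
  (forall k, (k < i)%N -> c k = p k) -> (forall k, (i <= k)%N -> c k = q k) ->
  castL e (mid q i m (pref p i x)) = pref c N x.
Proof.
move=> cp cq; rewrite -(pref_ext cp) -(mid_ext m cq) mid_pref.
exact: castL_pref.
Qed.

Variable Phi : forall k, set (layer k -> layer k.+1).
Notation Fcls i := (@Fcls d X N Z Phi i).
Notation Gcls i := (@Gcls d X N Z Phi i).

Lemma Fcls_Gcls_comp_shift i j : (i <= j <= N)%N ->
  forall f, Fcls i f -> exists2 f', Fcls j f' &
    forall g, Gcls i g -> exists2 g', Gcls j g' & f' \o g' = f \o g.
Proof.
move=> /andP[ij jN] _ [q [m [e [Phiq ->]]]].
have ej : (N - j + j)%N = N by lia.
exists (castL ej \o mid q j (N - j)).
  by exists q, (N - j)%N, ej; split=> // k /andP[jk kN]; apply: Phiq; lia.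
move=> _ [p [Phip ->]].
exists (pref (splice i p q) j).
  exists (splice i p q); split=> // k kj; case: (ltnP k i) => ki.
    by rewrite splice_lt //; apply: Phip.
  by rewrite splice_ge //; apply: Phiq; lia.
apply: funext => x /=.
by rewrite !(castL_mid_pref (splice i p q)) // => k *;
  [apply: splice_lt | apply: splice_ge | apply: splice_ge; lia].
Qed.

Lemma Fcls_comp_pref_shift (h : layers) i j :
  (i <= j <= N)%N -> (forall k, (i <= k < j)%N -> Phi k (h k)) ->
  forall f, Fcls j f -> exists2 f', Fcls i f' &
    f' \o pref h i = f \o pref h j.
Proof.
move=> /andP[ij jN] Phih _ [q [m [e [Phiq ->]]]].
have ei : (N - i + i)%N = N by lia.
exists (castL ei \o mid (splice j h q) i (N - i)).
  exists (splice j h q), (N - i)%N, ei; split=> // k /andP[ik kN].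
  case: (ltnP k j) => kj; first by rewrite splice_lt //; apply: Phih; lia.
  by rewrite splice_ge //; apply: Phiq; lia.
apply: funext => x /=.
by rewrite !(castL_mid_pref (splice j h q)) // => k *;
  [apply: splice_lt | apply: splice_ge | apply: splice_lt; lia].
Qed.

End Layers.

Theorem proposition5 (R : realType) (d : measure_display) (X : measurableType d)
  (N : nat) (hN : (2 <= N)%N) (Z : nat -> Type)
  (Phi : forall k, set (layer X N Z k -> layer X N Z k.+1))
  (PS PT : probability (X * bool)%type R)
  (phi : forall k, layer X N Z k -> layer X N Z k.+1)
  (hphi : forall k, (k < N)%N -> Phi k (phi k))
  (i j : nat) (hi : (1 <= i)%N) (hij : (i <= j)%N) (hj : (j <= N - 1)%N) :
  (dFGDeltaG PS PT (@Fcls d X N Z Phi i) (@Gcls d X N Z Phi i)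
     <= dFGDeltaG PS PT (@Fcls d X N Z Phi j) (@Gcls d X N Z Phi j))%E /\
  (dFDeltaF PS PT (@Fcls d X N Z Phi i) (@pref d X N Z phi i)
     >= dFDeltaF PS PT (@Fcls d X N Z Phi j) (@pref d X N Z phi j))%E.
Proof.
have ijN : (i <= j <= N)%N by lia.
split.
- exact/dFGDeltaG_le/Fcls_Gcls_comp_shift.
- apply/dFDeltaF_le/Fcls_comp_pref_shift => // k /andP[_ kj].
  by apply: hphi; lia.
Qed.
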